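(* Fix integers $d\ge 2$ and $k\ge 1$. For a pure qudit input $\psi=\sum_{i,j=1}^d\beta_i\overline{\beta}_j\,|i\rangle\langle j|$ (with $\sum_i|\beta_i|^2=1$), let $$\sigma^{(k)}_B=\sum_{\vec n\in N(k-1)}|v_{\vec n}\rangle\langle v_{\vec n}|,\qquad |v_{\vec n}\rangle=\sum_{i=1}^d\beta_i\sqrt{1+n_i}\,|(n_1,\dots,1+n_i,\dots,n_d)\rangle_B ,$$ be the $k$-th block of the output of the qudit Unruh channel, and let $\mathcal{B}_k$ be the map obtained by normalizing this block to unit trace (normalization constant $\binom{k+d-1}{d}$) and extending linearly to all qudit density operators. Then $\mathcal{B}_k$ is equivalent to (i.e. is the same completely positive trace-preserving map as) the $1\to k$ universal qudit cloning channel $Cl^{(d)}_{1\to k}$, under the identification of the $d$-mode, $k$-photon Fock states $|(m_1,\dots,m_d)\rangle$ with the completely symmetric $k$-qudit states $|\vec m\rangle$.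
   Context: Notation: $N(m)=\{\vec n=(n_1,\dots,n_d)\in\mathbb{Z}_{\ge 0}^d:\sum_i n_i=m\}$; $|(n_1,\dots,n_d)\rangle$ denotes the $d$-mode photonic Fock state with $n_i$ photons in mode $i$. The qudit Unruh channel with parameter $z=\tanh^2 r\in[0,1)$ maps a single-excitation qudit state $\sum_i\beta_i|(0,\dots,1_i,\dots,0)\rangle$ to $\sigma_B=(1-z)^{d+1}\bigoplus_{k\ge1}z^{k-1}\sigma_B^{(k)}$ with $\sigma_B^{(k)}$ as in the claim, extended linearly. The $1\to k$ universal qudit cloner is the isometry acting on basis states $|i\rangle$ ($1\le i\le d$, identified with $\vec e_i$) by $|\vec e_i\rangle\otimes R\mapsto\sum_{\vec j\in N(k-1)}\alpha_{\vec e_i,\vec j}\,|\vec e_i+\vec j\rangle\otimes R_{\vec j}$, where $|\vec m\rangle$ denotes the normalized completely symmetric $k$-qudit state with $m_l$ qudits in state $|l\rangle$, the auxiliary states $R_{\vec j}$ are orthonormal, and $\alpha_{\vec n,\vec j}=\sqrt{\frac{(k-1)!\,d!}{(k+d-1)!}}\sqrt{\prod_{l=1}^d\frac{(n_l+j_l)!}{n_l!\,j_l!}}$. The universal cloning channel $Cl^{(d)}_{1\to k}$ is obtained by applying this isometry and tracing out the auxiliary system. *)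

From mathcomp Require Import all_boot all_order all_algebra all_field.
Set Implicit Arguments. Unset Strict Implicit. Unset Printing Implicit Defensive.
Import Order.TTheory GRing.Theory Num.Theory.
Local Open Scope ring_scope.

(* Occupation-number vectors with d modes and entries at most k:
   this finite type contains both N(k) and N(k-1). *)
Definition occ (d k : nat) := {ffun 'I_d -> 'I_k.+1}.

Definition inN (d k m : nat) (n : occ d k) : bool :=
  (\sum_(l < d) (n l : nat))%N == m.

Definition isE (d k : nat) (i : 'I_d) (j m : occ d k) : bool :=
  [forall l : 'I_d, (m l : nat) == (j l + (l == i))%N].

(* |v_n> = sum_i beta_i sqrt(1+n_i) |n + e_i>, component at basis state m *)
Definition vvec (d k : nat) (beta : 'cV[algC]_d) (n m : occ d k) : algC :=
  \sum_(i < d) beta i 0 * sqrtC ((1 + n i)%N%:R) * (isE i n m)%:R.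

Definition sigmaB (d k : nat) (beta : 'cV[algC]_d) (m m' : occ d k) : algC :=
  \sum_(n : occ d k | inN k.-1 n) vvec beta n m * (vvec beta n m')^*.

Definition normB (d k : nat) : algC := ('C(k + d - 1, d))%:R.

(* B_k : linear extension of  psi = beta beta^*  |->  sigma_B^{(k)} / normB
   (beta_i conj(beta_i') replaced by rho_{i i'}) *)
Definition Bk (d k : nat) (rho : 'M[algC]_d) (m m' : occ d k) : algC :=
  (normB d k)^-1 *
  \sum_(n : occ d k | inN k.-1 n) \sum_(i < d) \sum_(i' < d)
     rho i i' * sqrtC ((1 + n i)%N%:R) * sqrtC ((1 + n i')%N%:R)
       * (isE i n m)%:R * (isE i' n m')%:R.

Definition alpha (d k : nat) (i : 'I_d) (j : occ d k) : algC :=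
  sqrtC (((k.-1)`! * d`!)%N%:R / ((k + d - 1)`!)%N%:R) *
  sqrtC (\prod_(l < d)
           ((((l == i) + j l)`!)%N%:R / (((l == i) : nat)`! * (j l)`!)%N%:R)).

(* the cloning isometry: <m, R_j| V |i>  (m in N(k), j in N(k-1)) *)
Definition Vclone (d k : nat) (m j : occ d k) (i : 'I_d) : algC :=
  (isE i j m)%:R * alpha i j.

(* Cl^{(d)}_{1->k}(rho) = Tr_aux (V rho V^dagger), aux basis R_j, j in N(k-1) *)
Definition Cl (d k : nat) (rho : 'M[algC]_d) (m m' : occ d k) : algC :=
  \sum_(j : occ d k | inN k.-1 j) \sum_(i < d) \sum_(i' < d)
     Vclone m j i * rho i i' * (Vclone m' j i')^*.

(* The cloner's amplitudes collapse to
   alpha_{e_i, j} = sqrt((1 + j_i) / binom(k+d-1, d)): in the product defining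
   them only the factor l = i differs from 1, and the prefactor
   (k-1)! d! / (k+d-1)! is the inverse binomial coefficient.  Substituting this
   into Cl(rho) reproduces the normalised Unruh block B_k(rho) term by term, and
   a pure input is the case rho = beta beta^*. *)
From mathcomp Require Import all_boot all_order all_algebra all_field.
From mathcomp Require Import zify ring.
Import Order.TTheory GRing.Theory Num.Theory.
Local Open Scope ring_scope.

Lemma natr_fact_neq0 (R : numDomainType) (n : nat) : (n`!%:R : R) != 0.
Proof. by rewrite pnatr_eq0 -lt0n fact_gt0. Qed.

Lemma prod_fact_delta (R : numFieldType) (d : nat) (i : 'I_d) (j : 'I_d -> nat) :
  \prod_(l < d) ((((l == i) + j l)`!)%N%:R / (((l == i) : nat)`! * (j l)`!)%N%:R)
  = (1 + j i)%N%:R :> R.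
Proof.
rewrite (bigD1 i) //= eqxx big1 ?mulr1.
  by rewrite add1n factS mul1n natrM mulfK ?natr_fact_neq0.
by move=> l /negbTE ->; rewrite add0n mul1n divff ?natr_fact_neq0.
Qed.

Lemma fact_ratio_binV (R : numFieldType) (n m : nat) : (m <= n)%N ->
  (((n - m)`! * m`!)%N%:R / (n`!)%:R : R) = ('C(n, m)%:R)^-1.
Proof.
move=> le_mn; rewrite -(bin_fact le_mn) !natrM.
have Cnm_neq0 : ('C(n, m)%:R : R) != 0 by rewrite pnatr_eq0 -lt0n bin_gt0.
by field; rewrite Cnm_neq0 !natr_fact_neq0.
Qed.

Lemma conj_sqrtC_ge0 (x : algC) : 0 <= x -> (sqrtC x)^* = sqrtC x.
Proof. by move=> x_ge0; rewrite geC0_conj ?sqrtC_ge0. Qed.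

Lemma alpha_sqrt_normB (d k : nat) (i : 'I_d) (j : occ d k) : (1 <= k)%N ->
  alpha i j = sqrtC (normB d k)^-1 * sqrtC (1 + j i)%N%:R.
Proof.
move=> k_gt0; rewrite /alpha (@prod_fact_delta _ _ i (fun l => nat_of_ord (j l))).
have -> : k.-1 = (k + d - 1 - d)%N by lia.
by rewrite fact_ratio_binV //; lia.
Qed.

Lemma Bk_Cl (d k : nat) (rho : 'M[algC]_d) (m m' : occ d k) : (1 <= k)%N ->
  Bk rho m m' = Cl rho m m'.
Proof.
move=> k_gt0; rewrite /Bk /Cl mulr_sumr; apply: eq_bigr => n _.
rewrite mulr_sumr; apply: eq_bigr => i _.
rewrite mulr_sumr; apply: eq_bigr => i' _.
rewrite /Vclone !alpha_sqrt_normB // !rmorphM /= rmorph_nat.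
rewrite !conj_sqrtC_ge0 ?invr_ge0 ?ler0n //.
rewrite -{1}(sqrtCK (normB d k)^-1) expr2; ring.
Qed.

Lemma sigmaB_Bk (d k : nat) (beta : 'cV[algC]_d) (m m' : occ d k) :
  (normB d k)^-1 * sigmaB beta m m' = Bk (beta *m (map_mx Num.conj beta)^T) m m'.
Proof.
rewrite /Bk /sigmaB; congr (_ * _); apply: eq_bigr => n _.
rewrite /vvec rmorph_sum /= mulr_suml; apply: eq_bigr => i _.
rewrite mulr_sumr; apply: eq_bigr => i' _.
rewrite !mxE big_ord1 !mxE !rmorphM /= rmorph_nat conj_sqrtC_ge0 ?ler0n //.
ring.
Qed.

(* The identities hold for all occupation vectors. *)
Theorem lemma1 (d k : nat) (hd : (2 <= d)%N) (hk : (1 <= k)%N) :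
  (forall (beta : 'cV[algC]_d), \sum_(i < d) `|beta i 0| ^+ 2 = 1 ->
     forall m m' : occ d k, inN k m -> inN k m' ->
       (normB d k)^-1 * sigmaB beta m m' = Cl (beta *m (map_mx Num.conj beta)^T) m m') /\
  (forall (rho : 'M[algC]_d) (m m' : occ d k), inN k m -> inN k m' ->
       Bk rho m m' = Cl rho m m').
Proof.
split=> [beta _ m m' _ _ | rho m m' _ _]; last exact: Bk_Cl.
by rewrite sigmaB_Bk Bk_Cl.
Qed.
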